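(* If \(M\) is a nuclear bornological \(V\)-module, then so is its completion \(\overline{M}\).
   Context: Let \(V\) be a complete discrete valuation ring with uniformiser \(\pi\). A bornology on a set is a collection of subsets (called bounded) containing all finite subsets and closed under finite unions and under taking subsets. A bornological \(V\)-module is a \(V\)-module with a bornology such that every bounded subset is contained in a bounded \(V\)-submodule; bounded maps are \(V\)-linear maps sending bounded sets to bounded sets. It is complete if every bounded subset is contained in a bounded, \(\pi\)-adically complete \(V\)-submodule. Every bornological \(V\)-module \(M\) has a completion \(\overline{M}\): a complete bornological \(V\)-module with a bounded map \(M\to\overline M\) through which every bounded map from \(M\) to a complete bornological \(V\)-module factors uniquely. A subset \(S\) of a bornological \(V\)-module \(M\) is compactoid if there is a bounded \(V\)-submodule \(T\subseteq M\) with \(S\subseteq T\) such that for every \(n\in\mathbb N\) there is a finite set \(F_n\subseteq T\) with \(S\subseteq VF_n+\pi^nT\). \(M\) is nuclear if every bounded subset of \(M\) is compactoid. *)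

From mathcomp Require Import all_boot all_algebra.
Set Implicit Arguments. Unset Strict Implicit. Unset Printing Implicit Defensive.
Import GRing.Theory.
Local Open Scope ring_scope.

Definition subsetP {M : Type} (A B : M -> Prop) := forall x, A x -> B x.

Section BornDefs.
Variables (V : idomainType) (pi : V).

Definition is_submod (M : lmodType V) (T : M -> Prop) :=
  [/\ T 0, (forall x y, T x -> T y -> T (x + y)) &
      (forall (a : V) x, T x -> T (a *: x))].

Definition in_piT (M : lmodType V) (T : M -> Prop) (n : nat) (x : M) :=
  exists t, T t /\ x = pi ^+ n *: t.

(* T is pi-adically complete (Hausdorff and complete): T -> lim T/pi^n T
   is bijective, expressed via pi-adically Cauchy sequences. *)
Definition pi_adically_complete (M : lmodType V) (T : M -> Prop) :=
  (forall x, T x -> (forall n, in_piT T n x) -> x = 0) /\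
  (forall u : nat -> M, (forall k, T (u k)) ->
     (forall k, in_piT T k (u k.+1 - u k)) ->
     exists2 x, T x & forall k, in_piT T k (x - u k)).

Definition is_complete_dvr :=
  [/\ pi != 0, pi \notin GRing.unit,
      (forall x : V, x != 0 -> exists u n, u \in GRing.unit /\ x = u * pi ^+ n) &
      pi_adically_complete (fun _ : V^o => True)].

Definition is_bornology (M : eqType) (B : (M -> Prop) -> Prop) :=
  [/\ (forall (S : M -> Prop) (s : seq M), subsetP S (fun x => x \in s) -> B S),
      (forall S1 S2, B S1 -> B S2 -> B (fun x => S1 x \/ S2 x)) &
      (forall S1 S2, subsetP S1 S2 -> B S2 -> B S1)].

Definition is_born_mod (M : lmodType V) (B : (M -> Prop) -> Prop) :=
  is_bornology B /\
  forall S, B S -> exists T, [/\ is_submod T, B T & subsetP S T].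

Definition is_complete_born (M : lmodType V) (B : (M -> Prop) -> Prop) :=
  is_born_mod B /\
  forall S, B S -> exists T,
    [/\ is_submod T, B T, pi_adically_complete T & subsetP S T].

Definition is_linear (M N : lmodType V) (f : M -> N) :=
  forall (a : V) x y, f (a *: x + y) = a *: f x + f y.

Definition is_bounded_map (M N : lmodType V) (BM : (M -> Prop) -> Prop)
  (BN : (N -> Prop) -> Prop) (f : M -> N) :=
  is_linear f /\ forall S, BM S -> BN (fun y => exists2 x, S x & y = f x).

Definition is_completion (M : lmodType V) (BM : (M -> Prop) -> Prop)
  (N : lmodType V) (BN : (N -> Prop) -> Prop) (i : M -> N) :=
  [/\ is_complete_born BN, is_bounded_map BM BN i &
   forall (P : lmodType V) (BP : (P -> Prop) -> Prop) (g : M -> P),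
     is_complete_born BP -> is_bounded_map BM BP g ->
     exists h : N -> P, [/\ is_bounded_map BN BP h, (forall x, h (i x) = g x) &
        forall h' : N -> P, is_bounded_map BN BP h' ->
          (forall x, h' (i x) = g x) -> forall y, h' y = h y]].

Definition compactoid (M : lmodType V) (B : (M -> Prop) -> Prop) (S : M -> Prop) :=
  exists T, [/\ is_submod T, B T, subsetP S T &
    forall n : nat, exists F : seq M, (forall f, f \in F -> T f) /\
      forall x, S x -> exists (c : nat -> V) (t : M),
        T t /\ x = \sum_(k < size F) c k *: F`_k + pi ^+ n *: t].

Definition nuclear (M : lmodType V) (B : (M -> Prop) -> Prop) :=
  is_born_mod B /\ forall S, B S -> compactoid B S.

End BornDefs.

(* Bounded compactoid subsets of a complete bornological module N form again a
   complete bornology.  A bounded compactoid S lies in a bounded pi-adically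
   complete submodule T1; the points of T1 lying in every span F + pi^n T1
   that contains S form a compactoid submodule which is pi-adically closed in
   T1, hence complete.  Bounded maps preserve compactoids, so when M is nuclear
   the map i : M -> N stays bounded for this finer bornology.  The universal
   property then yields an endomorphism of N extending i and bounded into the
   finer bornology; by uniqueness it is the identity, so every bounded subset
   of N is compactoid. *)

From Pilot Require Import Defs.
From mathcomp Require Import all_boot all_algebra.
From Stdlib Require Import ClassicalEpsilon.
(* Re-imported so that [subsetP] denotes the predicate of Defs, not finset's view. *)
Import Pilot.Defs.
Set Implicit Arguments. Unset Strict Implicit. Unset Printing Implicit Defensive.
Import GRing.Theory.
Local Open Scope ring_scope.

Section Bornology.
Variables (V : idomainType) (pi : V).

Section Submodule.
Variables (M : lmodType V) (T : M -> Prop).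
Hypothesis subT : is_submod T.

Lemma submod0 : T 0. Proof. by case: subT. Qed.

Lemma submodD x y : T x -> T y -> T (x + y).
Proof. by case: subT => _ + _; apply. Qed.

Lemma submodZ a x : T x -> T (a *: x).
Proof. by case: subT => _ _; apply. Qed.

Lemma submodB x y : T x -> T y -> T (x - y).
Proof. by move=> Tx Ty; rewrite -scaleN1r; apply/submodD/submodZ. Qed.

Lemma submod_sum (I : Type) (r : seq I) (P : pred I) (F : I -> M) :
  (forall i, P i -> T (F i)) -> T (\sum_(i <- r | P i) F i).
Proof. by move=> TF; apply: big_ind => //; [exact: submod0 | exact: submodD]. Qed.

Lemma in_piT_submod n x : in_piT pi T n x -> T x.
Proof. by move=> [t [Tt ->]]; exact: submodZ. Qed.

Lemma in_piTB n x y : in_piT pi T n x -> in_piT pi T n y -> in_piT pi T n (x - y).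
Proof.
by move=> [s [Ts ->]] [t [Tt ->]]; exists (s - t); rewrite scalerBr; split => //; exact: submodB.
Qed.

Lemma in_piTZ n a x : in_piT pi T n x -> in_piT pi T n (a *: x).
Proof.
by move=> [t [Tt ->]]; exists (a *: t); rewrite !scalerA mulrC; split => //; exact: submodZ.
Qed.

Lemma in_piT_le m n x : (m <= n)%N -> in_piT pi T n x -> in_piT pi T m x.
Proof.
move=> /subnK <- [t [Tt ->]]; exists (pi ^+ (n - m) *: t).
by rewrite scalerA -exprD addnC; split => //; exact: submodZ.
Qed.

End Submodule.

Lemma in_piT_mono (M : lmodType V) (T T' : M -> Prop) n x :
  subsetP T T' -> in_piT pi T n x -> in_piT pi T' n x.
Proof. by move=> sTT' [t [/sTT' T't ->]]; exists t. Qed.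

Section PiAdic.
Variable M : lmodType V.

Definition pi_cauchy (T : M -> Prop) (u : nat -> M) :=
  (forall k, T (u k)) /\ forall k, in_piT pi T k (u k.+1 - u k).

Definition pi_limit (T : M -> Prop) (u : nat -> M) (x : M) :=
  forall k, in_piT pi T k (x - u k).

Definition pi_closed_in (T1 T : M -> Prop) :=
  forall (w : nat -> M) x, (forall m, T (w m)) -> T1 x -> pi_limit T1 w x -> T x.

Lemma pi_cauchy_mono (T T' : M -> Prop) u :
  subsetP T T' -> pi_cauchy T u -> pi_cauchy T' u.
Proof. by move=> sTT' [Tu Cu]; split=> k; [exact/sTT' | exact: in_piT_mono (Cu k)]. Qed.

Lemma pi_cauchy_tail (T : M -> Prop) u k : is_submod T -> pi_cauchy T u ->
  exists2 w, pi_cauchy T w & forall m, pi ^+ k *: w m = u (k + m)%N - u k.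
Proof.
move=> subT [Tu Cu].
have [d Hd] := choice (fun j t => T t /\ u j.+1 - u j = pi ^+ j *: t) Cu.
exists (fun m => \sum_(j < m) pi ^+ j *: d (k + j)%N).
  split=> m; first by apply: submod_sum => // j _; apply: submodZ => //; exact: (Hd _).1.
  by exists (d (k + m)%N); rewrite big_ord_recr /= addrC addrK; split; first exact: (Hd _).1.
elim=> [|m IH]; first by rewrite big_ord0 scaler0 addn0 subrr.
rewrite big_ord_recr /= scalerDr IH scalerA -exprD addnS -(Hd _).2.
by rewrite addrC addrA subrK.
Qed.

Lemma pi_closed_complete (T1 T : M -> Prop) :
  pi_adically_complete pi T1 -> is_submod T1 -> is_submod T ->
  subsetP T T1 -> pi_closed_in T1 T -> pi_adically_complete pi T.
Proof.
move=> [sep1 cplt1] subT1 subT sTT1 clT; split.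
  by move=> x /sTT1 T1x hx; apply: sep1 => // n; exact: in_piT_mono (hx n).
have lim_in_T w : pi_cauchy T w -> exists2 x, T x & pi_limit T1 w x.
  move=> [Tw Cw]; have [T1w C1w] := pi_cauchy_mono sTT1 (conj Tw Cw).
  by have [x T1x wx] := cplt1 w T1w C1w; exists x => //; exact: (clT w).
move=> u Tu Cu; have [x Tx ux] := lim_in_T u (conj Tu Cu); exists x => // k.
have [w Cw ew] := pi_cauchy_tail k subT (conj Tu Cu).
have [y Ty wy] := lim_in_T w Cw.
exists y; split => //; apply/eqP; rewrite -subr_eq0; apply/eqP.
(* x - u k and pi^k y are both pi-adic limits of u (k + m) - u k = pi^k w m. *)
have small m : in_piT pi T1 m (x - u k - pi ^+ k *: y).
  have -> : x - u k - pi ^+ k *: y = x - u (k + m)%N - pi ^+ k *: (y - w m).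
    by rewrite scalerBr ew opprB !addrA subrK.
  by apply: in_piTB => //; [exact: in_piT_le (leq_addl k m) (ux _) | exact: in_piTZ].
exact: sep1 (in_piT_submod subT1 (small 0%N)) small.
Qed.

End PiAdic.

Section Compactoid.
Variable M : lmodType V.

Definition lincomb (F : seq M) (c : nat -> V) : M := \sum_(k < size F) c k *: F`_k.

Definition span (F : seq M) (x : M) := exists c, x = lincomb F c.

Lemma submod_span F : is_submod (span F).
Proof.
split.
- by exists (fun=> 0); rewrite /lincomb big1 // => k _; rewrite scale0r.
- move=> _ _ [c ->] [d ->]; exists (fun k => c k + d k).
  by rewrite /lincomb -big_split; apply: eq_bigr => k _; rewrite scalerDl.
- move=> a _ [c ->]; exists (fun k => a * c k).
  by rewrite /lincomb scaler_sumr; apply: eq_bigr => k _; rewrite scalerA.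
Qed.

Lemma span_mem F x : x \in F -> span F x.
Proof.
move=> Fx; have iF : (index x F < size F)%N by rewrite index_mem.
exists (fun k => (k == index x F)%:R); rewrite /lincomb (bigD1 (Ordinal iF)) //=.
rewrite eqxx scale1r nth_index // big1 ?addr0 // => k.
by rewrite -val_eqE /= => /negbTE ->; rewrite scale0r.
Qed.

Lemma span_subset F G x : {subset F <= G} -> span F x -> span G x.
Proof.
move=> sFG [c ->]; apply: (submod_sum (submod_span G)) => k _.
by apply: (submodZ (submod_span G)); apply/span_mem/sFG/mem_nth.
Qed.

Definition approx (T : M -> Prop) n F x :=
  exists y t, [/\ span F y, T t & x = y + pi ^+ n *: t].

Definition compactoid_in (T S : M -> Prop) :=
  forall n, exists F, (forall f, f \in F -> T f) /\ forall x, S x -> approx T n F x.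

Lemma compactoidP (B : (M -> Prop) -> Prop) S : compactoid pi B S <->
  exists T, [/\ is_submod T, B T, subsetP S T & compactoid_in T S].
Proof.
have approxE T n F x : approx T n F x <->
    exists (c : nat -> V) t, T t /\ x = \sum_(k < size F) c k *: F`_k + pi ^+ n *: t.
  split=> [[_ [t [[c ->] Tt ->]]] | [c [t [Tt ->]]]]; first by exists c, t.
  by exists (lincomb F c), t; split=> //; exists c.
split=> -[T [subT BT sST cT]]; exists T; split=> // n; have [F [FT SF]] := cT n;
  by exists F; split=> // x /SF /approxE.
Qed.

Lemma submod_approx T n F : is_submod T -> is_submod (approx T n F).
Proof.
move=> subT; have subF := submod_span F; split.
- by exists 0, 0; rewrite scaler0 addr0; split=> //; [exact: submod0 | exact: submod0].
- move=> _ _ [y [t [Fy Tt ->]]] [y' [t' [Fy' Tt' ->]]]; exists (y + y'), (t + t').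
  by rewrite scalerDr addrACA; split=> //; exact: submodD.
- move=> a _ [y [t [Fy Tt ->]]]; exists (a *: y), (a *: t).
  by rewrite scalerDr !scalerA mulrC; split=> //; exact: submodZ.
Qed.

Lemma approx_mono (T T' : M -> Prop) n F x :
  subsetP T T' -> approx T n F x -> approx T' n F x.
Proof. by move=> sTT' [y [t [Fy /sTT' T't ->]]]; exists y, t. Qed.

Lemma approx_subset T n F G x : {subset F <= G} -> approx T n F x -> approx T n G x.
Proof. by move=> sFG [y [t [Fy Tt ->]]]; exists y, t; split=> //; exact: span_subset Fy. Qed.

Lemma compactoid_in_mono (T T' S : M -> Prop) :
  subsetP T T' -> compactoid_in T S -> compactoid_in T' S.
Proof.
move=> sTT' cT n; have [F [FT SF]] := cT n.
by exists F; split=> [f /FT /sTT' | x /SF /(approx_mono sTT')].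
Qed.

Section BornologicalModule.
Variable B : (M -> Prop) -> Prop.

Lemma compactoid_subset S S' : compactoid pi B S -> subsetP S' S -> compactoid pi B S'.
Proof.
move=> /compactoidP [T [subT BT sST cT]] sS'S; apply/compactoidP; exists T; split=> //.
  by move=> x /sS'S /sST.
by move=> n; have [F [FT SF]] := cT n; exists F; split=> // x /sS'S /SF.
Qed.

Hypothesis bornB : is_born_mod B.

Lemma compactoid_seq (s : seq M) : compactoid pi B (fun x => x \in s).
Proof.
case: bornB => -[Bfin _ _] Bsub; have [T [subT BT sT]] := Bsub _ (Bfin _ s (fun x sx => sx)).
apply/compactoidP; exists T; split=> // n; exists s; split=> [f /sT //| x sx].
by exists x, 0; rewrite scaler0 addr0; split=> //; [exact: span_mem | exact: submod0].
Qed.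

Lemma compactoid_union S1 S2 : compactoid pi B S1 -> compactoid pi B S2 ->
  compactoid pi B (fun x => S1 x \/ S2 x).
Proof.
case: bornB => -[_ Bun _] Bsub.
move=> /compactoidP [T1 [_ BT1 sST1 cT1]] /compactoidP [T2 [_ BT2 sST2 cT2]].
have [T [subT BT sT]] := Bsub _ (Bun _ _ BT1 BT2).
have sT1T : subsetP T1 T by move=> x T1x; apply: sT; left.
have sT2T : subsetP T2 T by move=> x T2x; apply: sT; right.
apply/compactoidP; exists T; split=> //; first by move=> x [/sST1 /sT1T | /sST2 /sT2T].
move=> n; have [F1 [F1T SF1]] := compactoid_in_mono sT1T cT1 n.
have [F2 [F2T SF2]] := compactoid_in_mono sT2T cT2 n.
exists (F1 ++ F2); split; first by move=> f; rewrite mem_cat => /orP [/F1T | /F2T].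
by move=> x [/SF1 | /SF2]; apply: approx_subset => f Ff; rewrite mem_cat Ff ?orbT.
Qed.

End BornologicalModule.

Definition hull (T1 S : M -> Prop) x :=
  T1 x /\ forall n F, (forall s, S s -> approx T1 n F s) -> approx T1 n F x.

Section Hull.
Variables T1 S : M -> Prop.
Hypothesis subT1 : is_submod T1.

Lemma submod_hull : is_submod (hull T1 S).
Proof.
have subA n F := submod_approx n F subT1.
split.
- by split=> [|n F _]; [exact: submod0 | exact: submod0 (subA n F)].
- move=> x y [T1x Ax] [T1y Ay]; split=> [|n F SF]; first exact: submodD.
  by apply: submodD (subA n F) _ _ (Ax n F SF) (Ay n F SF).
- move=> a x [T1x Ax]; split=> [|n F SF]; first exact: submodZ.
  by apply: submodZ (subA n F) _ _ (Ax n F SF).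
Qed.

Lemma pi_closed_hull : pi_closed_in T1 (hull T1 S).
Proof.
move=> w x Hw T1x wx; split=> // n F SF.
have [y [t [Fy T1t ew]]] := (Hw n).2 n F SF.
have [t' [T1t' ex]] := wx n.
exists y, (t + t'); split=> //; first exact: submodD.
by rewrite scalerDr addrA -ew -ex addrC subrK.
Qed.

Lemma sub_hull : subsetP S T1 -> subsetP S (hull T1 S).
Proof. by move=> sST1 x Sx; split=> [|n F]; [exact: sST1 | apply]. Qed.

Lemma compactoid_in_hull : compactoid_in T1 S -> compactoid_in T1 (hull T1 S).
Proof.
by move=> cS n; have [F [FT1 SF]] := cS n; exists F; split=> // x [_]; apply.
Qed.

End Hull.

Definition bounded_compactoid (B : (M -> Prop) -> Prop) S := B S /\ compactoid pi B S.

Section CompleteBornologicalModule.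
Variable B : (M -> Prop) -> Prop.
Hypothesis complB : is_complete_born pi B.

Lemma bounded_compactoid_complete_hull S : bounded_compactoid B S ->
  exists T, [/\ is_submod T, bounded_compactoid B T,
                pi_adically_complete pi T & subsetP S T].
Proof.
case: complB => -[[_ _ Bsub] _] Bcomplete [BS /compactoidP [T0 [_ BT0 sST0 cT0]]].
have [T1 [subT1 BT1 complT1 sT0T1]] := Bcomplete _ BT0.
have sHT1 : subsetP (hull T1 S) T1 by move=> x [].
exists (hull T1 S); split.
- exact: submod_hull.
- split; first exact: Bsub BT1.
  apply/compactoidP; exists T1; split=> //.
  exact/compactoid_in_hull/(compactoid_in_mono sT0T1).
- apply: (pi_closed_complete complT1 subT1 _ sHT1).
  + exact: submod_hull.
  + exact: pi_closed_hull.
- by apply: sub_hull => x /sST0 /sT0T1.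
Qed.

Lemma complete_born_bounded_compactoid : is_complete_born pi (bounded_compactoid B).
Proof.
have bornB := complB.1; case: (bornB) => -[Bfin Bun Bsub] _.
split; last exact: bounded_compactoid_complete_hull.
split; last first.
  by move=> S /bounded_compactoid_complete_hull [T [subT BT _ sST]]; exists T.
split.
- move=> S s sSs; split; first exact: Bfin sSs.
  exact: compactoid_subset (compactoid_seq bornB s) sSs.
- move=> S1 S2 [BS1 cS1] [BS2 cS2]; split; first exact: Bun.
  exact: compactoid_union.
- move=> S1 S2 sS12 [BS2 cS2]; split; first exact: Bsub BS2.
  exact: compactoid_subset cS2 sS12.
Qed.

End CompleteBornologicalModule.
End Compactoid.

Definition image_of (M N : lmodType V) (f : M -> N) (S : M -> Prop) (y : N) :=
  exists2 x, S x & y = f x.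

Section LinearImage.
Variables (M N : lmodType V) (f : M -> N).
Hypothesis linf : is_linear f.

Lemma lin0 : f 0 = 0.
Proof.
by move: (linf 1 0 0); rewrite !scale1r addr0 => /eqP; rewrite -subr_eq subrr eq_sym => /eqP.
Qed.

Lemma linD x y : f (x + y) = f x + f y.
Proof. by have := linf 1 x y; rewrite !scale1r. Qed.

Lemma linZ a x : f (a *: x) = a *: f x.
Proof. by have := linf a x 0; rewrite !addr0 lin0 addr0. Qed.

Lemma submod_image T : is_submod T -> is_submod (image_of f T).
Proof.
move=> subT; split.
- by exists 0; [exact: submod0 | rewrite lin0].
- by move=> _ _ [x Tx ->] [y Ty ->]; exists (x + y); [exact: submodD | rewrite linD].
- by move=> a _ [x Tx ->]; exists (a *: x); [exact: submodZ | rewrite linZ].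
Qed.

Lemma span_image F y : span F y -> span (map f F) (f y).
Proof.
move=> [c ->]; exists c; rewrite /lincomb size_map (big_morph f linD lin0).
by apply: eq_bigr => k _; rewrite linZ (nth_map 0) // lin0.
Qed.

Lemma approx_image T n F x :
  approx T n F x -> approx (image_of f T) n (map f F) (f x).
Proof.
move=> [y [t [Fy Tt ->]]]; exists (f y), (f t).
by rewrite linD linZ; split=> //; [exact: span_image | exists t].
Qed.

Lemma compactoid_image BM BN S : is_bounded_map BM BN f ->
  compactoid pi BM S -> compactoid pi BN (image_of f S).
Proof.
move=> [_ bf] /compactoidP [T [subT BT sST cT]]; apply/compactoidP.
exists (image_of f T); split; [exact: submod_image | exact: bf | |].
  by move=> _ [x /sST Tx ->]; exists x.
move=> n; have [F [FT SF]] := cT n; exists (map f F); split.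
  by move=> _ /mapP [x /FT Tx ->]; exists x.
by move=> _ [x /SF Ax ->]; exact: approx_image.
Qed.

End LinearImage.

Lemma completion_bornology_minimal (M N : lmodType V) (BM : (M -> Prop) -> Prop)
    (BN BN' : (N -> Prop) -> Prop) (i : M -> N) :
  is_completion pi BM BN i -> is_complete_born pi BN' ->
  (forall S, BN' S -> BN S) -> is_bounded_map BM BN' i ->
  forall S, BN S -> BN' S.
Proof.
move=> [complN bi univ] complN' sB'B bi' S BS.
have [[[_ _ BNsub] _] _] := complN; have [[[_ _ BN'sub] _] _] := complN'.
have [h [[linh bh] hi _]] := univ N BN' i complN' bi'.
have [h0 [_ _ h0_unique]] := univ N BN i complN bi.
have id_bounded : is_bounded_map BN BN id.
  by split=> // T BT; apply: BNsub BT => _ [x Tx ->].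
have h_bounded : is_bounded_map BN BN h by split=> // T /bh /sB'B.
have hE y : h y = y.
  by rewrite (h0_unique h h_bounded hi) -(h0_unique id id_bounded).
by apply: BN'sub (bh S BS) => y Sy; exists y; rewrite ?hE.
Qed.

End Bornology.

Theorem lemma4p4 (V : idomainType) (pi : V) :
  is_complete_dvr pi ->
  forall (M : lmodType V) (BM : (M -> Prop) -> Prop),
    nuclear pi BM ->
    forall (N : lmodType V) (BN : (N -> Prop) -> Prop) (i : M -> N),
      is_completion pi BM BN i ->
      nuclear pi BN.
Proof.
move=> _ M BM [_ nucM] N BN i complN.
have [complBN [lini bi] _] := complN.
have bci : is_bounded_map BM (bounded_compactoid pi BN) i.
  split=> // S BS; split; first exact: bi.
  exact: compactoid_image (conj lini bi) (nucM S BS).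
split=> [|S BS]; first exact: complBN.1.
have BcS := completion_bornology_minimal complN
  (complete_born_bounded_compactoid complBN) (fun T BcT => BcT.1) bci BS.
exact: BcS.2.
Qed.
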